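(* Let $d_H$ be an $H$-metric on $\chi$ with parameter $\gamma$. Then GD-$k$ with rate $r=\frac{1}{\gamma k^2}$ is $(4mk+k^2)\gamma$-competitive for $k$-MPMD on $(\chi,d_H)$: for every instance $\sigma$ with $m$ requests (and for every way of making the arbitrary choices in the algorithm), the total cost of the perfect $k$-way matching output by GD-$k$ is at most $(4mk+k^2)\gamma\cdot\mathcal{OPT}(\sigma)$.
   Context: $k\ge2$. An $H$-metric with parameter $\gamma$ (integer, $1\le\gamma\le k-1$) is a map $d_H:\chi^k\to[0,\infty)$ that is invariant under permutation of its arguments, is zero iff all arguments are equal, satisfies $d_H(p_1,\ldots,p_k)\le d_H(p_1,\ldots,p_i,a,\ldots,a)+d_H(a,\ldots,a,p_{i+1},\ldots,p_k)$ for all $p_j,a\in\chi$ and $i\in\{1,\dots,k\}$ (with $k-i$, resp. $i$, copies of $a$), and satisfies: $d_H(p)\le d_H(p')$ whenever the set of distinct entries of $p$ is a proper subset of that of $p'$, and $d_H(p)\le\gamma d_H(p')$ whenever these sets are equal. $k$-MPMD: an instance is $\sigma=(V,\mathrm{atime},\mathrm{pos})$ with $V=\{u_1,\ldots,u_m\}$ ($m$ a multiple of $k$), nondecreasing arrival times $\mathrm{atime}:V\to\mathbb R_{\ge0}$ and positions $\mathrm{pos}:V\to\chi$; requests arrive over time and an online algorithm must partition $V$ into $k$-element groups (a perfect $k$-way matching), forming a group $\{v_1,\ldots,v_k\}$ of arrived, unmatched requests at some time $\tau$ at cost $d_H(\mathrm{pos}(v_1),\ldots,\mathrm{pos}(v_k))+\sum_{i=1}^k(\tau-\mathrm{atime}(v_i))$.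 $\mathcal{OPT}(\sigma)$ is the minimum, over all perfect $k$-way matchings $\mathcal M$ of $V$, of $\sum_{F\in\mathcal M}\big(d_H(\mathrm{pos}(F))+\sum_{v\in F}(\max_{u\in F}\mathrm{atime}(u)-\mathrm{atime}(v))\big)$. The metric $d$ on $\chi$ is $d(p,q):=d_H(p,q,\ldots,q)+d_H(q,p,\ldots,p)$ (first argument once, second $k-1$ times); for distinct requests, $\mathrm{opt\text{-}cost}(\{u,w\}):=d(\mathrm{pos}(u),\mathrm{pos}(w))+|\mathrm{atime}(u)-\mathrm{atime}(w)|$; $\delta(S)$ is the set of pairs of distinct requests with exactly one element in $S$. Algorithm GD-$k$ (Greedy Dual for $k$-MPMD) runs in continuous time from $0$. It maintains: a partition of the already-arrived requests into ''active sets'' ($A(v)$ denotes the active set containing $v$); a family $\mathcal M$ of disjoint $k$-element sets of requests (the groups matched so far); a request is free if it lies in no set of $\mathcal M$, and $\mathrm{free}(S)$ is the set of free requests of $S$; and dual values $y_S(\tau)\ge0$ for $S\subseteq V$, all initially $0$. When a request $v$ arrives, $A(v):=\{v\}$ is created. At every moment, for each active set $S$ with $\mathrm{free}(S)\ne\emptyset$, $y_S$ increases continuously at rate $r$; all other $y_S$ stay constant. Whenever a pair $e=\{u,w\}$ of arrived requests with $A(u)\ne A(w)$ becomes tight, i.e. $\sum_{S:e\in\delta(S)}y_S=\frac{1}{\gamma k^2}\mathrm{opt\text{-}cost}(e)$, the algorithm replaces $A(u)$ and $A(w)$ by the single active set $S=A(u)\cup A(w)$, marks $e$, and, while $|\mathrm{free}(S)|\ge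 k$, chooses arbitrarily $k$ free requests of $S$ and adds them as a group to $\mathcal M$ (they are matched at the current time). *)

From HB Require Import structures.
From mathcomp Require Import all_boot all_order all_algebra all_fingroup.
From mathcomp Require Import reals.
Set Implicit Arguments. Unset Strict Implicit. Unset Printing Implicit Defensive.
Import Order.TTheory GRing.Theory Num.Theory.
Local Open Scope ring_scope.

Definition range_sub (X : Type) (k : nat) (p p' : 'I_k -> X) : Prop :=
  forall i, exists j, p i = p' j.

Definition H_metric (R : realType) (X : Type) (k gamma : nat)
    (dH : ('I_k -> X) -> R) : Prop :=
  [/\ (forall (p : 'I_k -> X) (s : {perm 'I_k}), dH (fun i => p (s i)) = dH p),
      (forall p, 0 <= dH p),
      (forall p, dH p = 0 <-> (forall i j, p i = p j)),
      (forall (p : 'I_k -> X) (a : X) (i : nat), (1 <= i <= k)%N ->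
          dH p <= dH (fun j => if (val j < i)%N then p j else a)
                + dH (fun j => if (val j < i)%N then a else p j)) &
      (forall p p', range_sub p p' /\ ~ range_sub p' p -> dH p <= dH p') /\
      (forall p p', range_sub p p' /\ range_sub p' p -> dH p <= gamma%:R * dH p')].

Record gstate (R : realType) (m k : nat) := GState {
  gs_t : R;
  gs_A : {set {set 'I_m}};
  gs_M : seq ({ffun 'I_k -> 'I_m} * R);       (* matched groups with matching time *)
  gs_y : {set 'I_m} -> R
}.

Section GD.
Variables (R : realType) (X : Type) (k m gamma : nat).
Variables (dH : ('I_k -> X) -> R) (atime : 'I_m -> R) (pos : 'I_m -> X).

Definition dmet (p q : X) : R :=
  dH (fun j => if val j == 0%N then p else q)
  + dH (fun j => if val j == 0%N then q else p).

Definition opt_cost_pair (u w : 'I_m) : R :=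
  dmet (pos u) (pos w) + `|atime u - atime w|.

Definition tight_bound (u w : 'I_m) : R :=
  opt_cost_pair u w / (gamma%:R * (k ^ 2)%:R).

Definition load (y : {set 'I_m} -> R) (u w : 'I_m) : R :=
  \sum_(S : {set 'I_m} | (u \in S) != (w \in S)) y S.

Definition grp (g : {ffun 'I_k -> 'I_m}) : {set 'I_m} := [set g i | i : 'I_k].

Definition matched (M : seq ({ffun 'I_k -> 'I_m} * R)) : {set 'I_m} :=
  \bigcup_(g <- M) grp g.1.

Definition freeS (M : seq ({ffun 'I_k -> 'I_m} * R)) (S : {set 'I_m}) :=
  S :\: matched M.

Variable r : R.

Definition grow (A : {set {set 'I_m}}) (M : seq ({ffun 'I_k -> 'I_m} * R))
    (y : {set 'I_m} -> R) (D : R) : {set 'I_m} -> R :=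
  fun S => if (S \in A) && (freeS M S != set0) then y S + r * D else y S.

Inductive gd_step : gstate R m k -> gstate R m k -> Prop :=
(* arrival of request v at its arrival time (requests arrive in index order) *)
| step_arrive t A M y (v : 'I_m) :
    v \notin cover A -> atime v = t ->
    (forall u : 'I_m, (val u < val v)%N -> u \in cover A) ->
    gd_step (GState t A M y) (GState t ([set v] |: A) M y)
(* time advances by D > 0; no arrival is skipped, no pair is currently
   tight, and no pair exceeds tightness during the advance *)
| step_advance t A M y (D : R) :
    0 < D ->
    (forall v, atime v < t + D -> v \in cover A) ->
    (forall u w, u \in cover A -> w \in cover A -> pblock A u != pblock A w ->
        load y u w < tight_bound u w /\
        load (grow A M y D) u w <= tight_bound u w) ->
    gd_step (GState t A M y) (GState (t + D) A M (grow A M y D))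
(* a tight pair {u,w} between different active sets: merge, then greedily
   match groups of k free requests of the merged set while >= k are free *)
| step_merge t A M y (u w : 'I_m) (gs : seq {ffun 'I_k -> 'I_m}) :
    u \in cover A -> w \in cover A -> pblock A u != pblock A w ->
    load y u w = tight_bound u w ->
    (forall g, g \in gs ->
       injectiveb g && (grp g \subset freeS M (pblock A u :|: pblock A w))) ->
    pairwise (fun g h => [disjoint grp g & grp h]) gs ->
    (#|freeS M (pblock A u :|: pblock A w) :\: \bigcup_(g <- gs) grp g| < k)%N ->
    gd_step (GState t A M y)
      (GState t ((pblock A u :|: pblock A w) |: ((A :\ pblock A u) :\ pblock A w))
              (M ++ [seq (g, t) | g <- gs]) y).

Definition gd_init : gstate R m k := GState 0 set0 [::] (fun _ => 0).

Inductive gd_reachable : gstate R m k -> Prop :=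
| reach_init : gd_reachable gd_init
| reach_step c c' : gd_reachable c -> gd_step c c' -> gd_reachable c'.

Definition gd_complete (c : gstate R m k) : Prop := matched (gs_M c) = setT.

Definition alg_cost (M : seq ({ffun 'I_k -> 'I_m} * R)) : R :=
  \sum_(g <- M) (dH (fun i => pos (g.1 i)) + \sum_(i < k) (g.2 - atime (g.1 i))).

Definition perfect_kmatching (P : {set {ffun 'I_k -> 'I_m}}) : Prop :=
  [/\ forall F, F \in P -> injective F,
      forall F G, F \in P -> G \in P -> F != G -> [disjoint grp F & grp G] &
      forall v, exists2 F, F \in P & v \in grp F].

Definition group_opt_cost (F : {ffun 'I_k -> 'I_m}) : R :=
  dH (fun i => pos (F i))
  + \sum_(i < k) (\big[Num.max/0]_(j < k) atime (F j) - atime (F i)).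

Definition matching_cost (P : {set {ffun 'I_k -> 'I_m}}) : R :=
  \sum_(F in P) group_opt_cost F.

End GD.

From HB Require Import structures.
From mathcomp Require Import all_boot all_order all_algebra all_fingroup.
From mathcomp Require Import reals.
From mathcomp Require Import ring lra.
From Stdlib Require Import FunctionalExtensionality Classical.
Set Implicit Arguments. Unset Strict Implicit. Unset Printing Implicit Defensive.
Import Order.TTheory GRing.Theory Num.Theory.
Local Open Scope ring_scope.

(* GD-k is a primal-dual algorithm, analysed through an invariant [gd_inv] kept
   along every run.  The duals are nonnegative, live on subsets of active sets
   whose size is not a multiple of k, and stay feasible: the load of every pair is
   at most its offline cost divided by K = gamma k^2.  A free request u carries
   dual mass r (t - atime u), so waiting times are paid by the duals; and since
   active sets only merge along tight pairs, the distance between two requests of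
   an active set is at most K times their load plus twice the duals nested in the
   set and avoiding both.  Hence each matched group costs at most 2 k K sum y, and
   GD-k pays at most (m / k) 2 k K sum y.
   Conversely, a set carrying dual mass has a size not divisible by k, so it is cut
   by a group of any perfect k-way matching; charging it to a pair formed by the
   first member of that group gives K sum y <= 2 k gamma OPT (weak duality).
   Altogether ALG <= 4 m k gamma OPT, which is within the claimed ratio. *)

Section HMetric.
Variables (R : realType) (X : Type) (k gamma : nat) (dH : ('I_k -> X) -> R).
Hypotheses (k_ge2 : (2 <= k)%N) (gamma_ge1 : (1 <= gamma)%N).
Hypothesis dH_Hmetric : H_metric gamma dH.

Definition dH1 (p q : X) : R := dH (fun j : 'I_k => if val j == 0%N then p else q).

Lemma eq_dH p q : (forall i, p i = q i) -> dH p = dH q.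
Proof. by move=> e; congr dH; apply: functional_extensionality. Qed.

Lemma dH_ge0 p : 0 <= dH p.
Proof. by case: dH_Hmetric. Qed.

Lemma dH_const p : (forall i j, p i = p j) -> dH p = 0.
Proof. by case: dH_Hmetric => _ _ h _ _ /h. Qed.

Lemma dH1_triangle p x q : dH1 p q <= dH1 p x + dH1 x q.
Proof.
case: dH_Hmetric => _ _ _ htri _.
have := htri (fun j : 'I_k => if val j == 0%N then p else q) x 1%N.
rewrite (ltnW k_ge2) /= => /(_ isT); rewrite /dH1.
rewrite (@eq_dH (fun j : 'I_k => if (val j < 1)%N then _ else x)
  (fun j : 'I_k => if val j == 0%N then p else x)); last by case=> [[|j] ?].
by rewrite (@eq_dH (fun j : 'I_k => if (val j < 1)%N then x else _)
  (fun j : 'I_k => if val j == 0%N then x else q)); last by case=> [[|j] ?].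
Qed.

Lemma dmet_ge0 p q : 0 <= dmet dH p q.
Proof. by rewrite addr_ge0 ?dH_ge0. Qed.

Lemma dmetC p q : dmet dH p q = dmet dH q p.
Proof. exact: addrC. Qed.

Lemma dmetxx p : dmet dH p p = 0.
Proof. by rewrite /dmet !dH_const ?addr0 // => i j; rewrite !if_same. Qed.

Lemma dmet_triangle p x q : dmet dH p q <= dmet dH p x + dmet dH x q.
Proof.
have := dH1_triangle p x q; have := dH1_triangle q x p.
rewrite /dmet -/(dH1 p q) -/(dH1 q p) -/(dH1 p x) -/(dH1 x p) -/(dH1 x q) -/(dH1 q x).
lra.
Qed.

Let i0 : 'I_k := Ordinal (ltnW k_ge2).

Lemma dH_point_le_dmet (e : 'I_k) x a :
  dH (fun j => if j == e then x else a) <= dmet dH x a.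
Proof.
case: dH_Hmetric => dH_perm _ _ _ _.
rewrite -(dH_perm _ (tperm i0 e)) (@eq_dH _ (fun j => if val j == 0%N then x else a)).
  by rewrite lerDl dH_ge0.
move=> j; have -> // : (tperm i0 e j == e) = (j == i0).
by rewrite -[X in _ == X](tpermL i0 e) (inj_eq perm_inj).
Qed.

Lemma dH_prefix_step (p : 'I_k -> X) a n (n_lt_k : (n < k)%N) :
  dH (fun j : 'I_k => if (val j < n.+1)%N then p j else a)
     <= dH (fun j : 'I_k => if (val j < n)%N then p j else a)
        + dH (fun j => if j == Ordinal n_lt_k then p (Ordinal n_lt_k) else a).
Proof.
case: n n_lt_k => [|n] n_lt_k.
  rewrite (@dH_const (fun j : 'I_k => if (val j < 0)%N then p j else a)) // add0r.
  rewrite (@eq_dH _ (fun j => if j == Ordinal n_lt_k then p (Ordinal n_lt_k) else a)) //.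
  by case=> [[|j] ?] //=; congr p; apply: val_inj.
case: dH_Hmetric => _ _ _ htri _.
have := htri (fun j : 'I_k => if (val j < n.+2)%N then p j else a) a n.+1.
rewrite (ltnW n_lt_k) => /(_ isT).
rewrite (@eq_dH (fun j : 'I_k => if (val j < n.+1)%N then _ else a)
  (fun j : 'I_k => if (val j < n.+1)%N then p j else a)); last first.
  by move=> j; case: ifP => // h; rewrite ltnS (ltnW h).
rewrite (@eq_dH (fun j : 'I_k => if (val j < n.+1)%N then a else _)
  (fun j => if j == Ordinal n_lt_k then p (Ordinal n_lt_k) else a)) //.
move=> j; rewrite -val_eqE /=; case: ltngtP => h //=.
- by rewrite ltnNge h.
- by rewrite h ltnSn; congr p; apply: val_inj.
Qed.

(* Splitting off one entry at a time, each replaced by the anchor [a]. *)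
Lemma dH_le_sum_dmet (p : 'I_k -> X) a : dH p <= \sum_(i < k) dmet dH (p i) a.
Proof.
suff prefix n : (n <= k)%N ->
    dH (fun j : 'I_k => if (val j < n)%N then p j else a)
      <= \sum_(i < k | (val i < n)%N) dmet dH (p i) a.
  have := prefix k (leqnn k); rewrite (@eq_dH _ p) => [|j]; last by rewrite ltn_ord.
  by rewrite (eq_bigl xpredT) // => i; rewrite ltn_ord.
elim: n => [|n IHn] n_le_k.
  by rewrite dH_const ?sumr_ge0 // => i _; apply: dmet_ge0.
rewrite (bigD1 (Ordinal n_le_k)) //= (eq_bigl (fun i : 'I_k => (val i < n)%N)).
  rewrite addrC (le_trans (dH_prefix_step p a n_le_k)) // lerD ?dH_point_le_dmet //.
  exact/IHn/ltnW.
by move=> i; rewrite ltnS leq_eqVlt -val_eqE /=; case: ltngtP.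
Qed.

Lemma dH1_le_group (F : 'I_k -> X) i j : dH1 (F i) (F j) <= gamma%:R * dH F.
Proof.
case: dH_Hmetric => _ _ _ _ [dH_sub dH_same].
have sub : range_sub (fun l : 'I_k => if val l == 0%N then F i else F j) F.
  by move=> l; case: ifP => _; [exists i | exists j].
have [/(conj sub)/dH_same //|sup] :=
  classic (range_sub F (fun l : 'I_k => if val l == 0%N then F i else F j)).
apply: le_trans (dH_sub _ _ (conj sub sup)) _.
by rewrite ler_peMl ?dH_ge0 // ler1n.
Qed.

Lemma dmet_le_group (F : 'I_k -> X) i j : dmet dH (F i) (F j) <= 2 * gamma%:R * dH F.
Proof. by rewrite -mulrA mulr2n mulrDl !mul1r lerD ?dH1_le_group. Qed.
End HMetric.

Section Partitions.
Variable T : finType.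
Implicit Types (A B S : {set T}) (P : {set {set T}}).

Lemma cover_setU1 B P : cover (B |: P) = B :|: cover P.
Proof. by rewrite /cover bigcup_setU big_set1. Qed.

Lemma cardsU_disjoint A B : [disjoint A & B] -> #|A :|: B| = (#|A| + #|B|)%N.
Proof. by move=> dAB; apply/eqP; rewrite (leq_card_setU A B).2. Qed.

Variables (P : {set {set T}}) (S1 S2 : {set T}).
Hypotheses (P_trivI : trivIset P) (P_set0 : set0 \notin P).
Hypotheses (S1_P : S1 \in P) (S2_P : S2 \in P) (S1_S2 : S1 != S2).

Definition merge_blocks := (S1 :|: S2) |: (P :\ S1 :\ S2).

Lemma merge_rest_disjoint B : B \in P :\ S1 :\ S2 -> [disjoint S1 :|: S2 & B].
Proof.
rewrite !inE => /and3P[B_S2 B_S1 B_P].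
rewrite -setI_eq0 setIUl !disjoint_setI0 ?setU0 //; apply: (trivIsetP P_trivI) => //.
- by rewrite eq_sym.
- by rewrite eq_sym.
Qed.

Lemma trivIset_merge : trivIset merge_blocks.
Proof.
apply: (trivIsetU1 merge_rest_disjoint _ _).1; first by rewrite !trivIsetD.
by apply: contra P_set0; rewrite !inE => /and3P[].
Qed.

Lemma merge_blocks_set0 : set0 \notin merge_blocks.
Proof.
rewrite !inE (negPf P_set0) !andbF orbF eq_sym setU_eq0.
by apply: contra P_set0 => /andP[/eqP <- _].
Qed.

Lemma cover_merge : cover merge_blocks = cover P.
Proof.
have S2_P1 : S2 \in P :\ S1 by rewrite in_setD1 eq_sym S1_S2.
have /subsetP S_cover : S1 :|: S2 \subset cover P by rewrite subUset !bigcup_sup.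
rewrite cover_setU1 !coverD1 ?trivIsetD //; apply/setP => x; move: (S_cover x).
by rewrite !inE; case: (x \in S1); case: (x \in S2); case: (x \in cover P) => //= /(_ isT).
Qed.

Lemma pblock_merge x : x \in cover P ->
  pblock merge_blocks x = if x \in S1 :|: S2 then S1 :|: S2 else pblock P x.
Proof.
move=> xP; have merge_trivI := trivIset_merge.
case: ifP => xS; apply: def_pblock; rewrite ?setU11 ?mem_pblock //.
have ne_pblock S : x \notin S -> pblock P x != S.
  by apply: contraNneq => <-; rewrite mem_pblock.
move: xS; rewrite inE => /norP[xS1 xS2].
by rewrite in_setU1 !in_setD1 pblock_mem // !ne_pblock ?orbT.
Qed.

Lemma merge_blocks_coarser B : B \in P -> exists2 B', B' \in merge_blocks & B \subset B'.
Proof.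
move=> BP; case: (boolP (B \in [set S1; S2])) => [/set2P BS|BS].
  by exists (S1 :|: S2); rewrite ?setU11 //; case: BS => ->; rewrite ?subsetUl ?subsetUr.
exists B => //; move: BS; rewrite !inE BP negb_or andbT => /andP[-> ->].
by rewrite orbT.
Qed.
End Partitions.

Lemma not_dvdn_cardsD (T : finType) (S N : {set T}) d :
  (d %| #|S :&: N|)%N -> (0 < #|S :\: N| < d)%N -> ~~ (d %| #|S|)%N.
Proof.
move=> dvd_SN /andP[SN_gt0 SN_lt]; rewrite -(cardsID N S) (dvdn_addr _ dvd_SN).
by apply: contraTN SN_lt => /(dvdn_leq SN_gt0); rewrite leqNgt.
Qed.

Lemma ler_sum_seq_const (R : numDomainType) (T : eqType) (s : seq T) (F : T -> R) C :
  (forall x, x \in s -> F x <= C) -> \sum_(x <- s) F x <= (size s)%:R * C.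
Proof.
elim: s => [|x s IHs] le_FC; first by rewrite big_nil mul0r.
rewrite big_cons /= -add1n natrD mulrDl mul1r lerD ?le_FC ?mem_head //.
by apply: IHs => z zs; rewrite le_FC // in_cons zs orbT.
Qed.

Lemma sum_mem_card (T : finType) (A B : {set T}) : (\sum_(v in A) (v \in B))%N = #|A :&: B|.
Proof.
rewrite -sum1_card (big_mkcond (fun v => v \in A :&: B)) (big_mkcond (fun v => v \in A)).
by apply: eq_bigr => v _; rewrite inE; case: (v \in A); case: (v \in B).
Qed.

Section GreedyDual.
Variables (R : realType) (X : Type) (k m gamma : nat) (dH : ('I_k -> X) -> R).
Variables (atime : 'I_m -> R) (pos : 'I_m -> X).
Hypotheses (k_ge2 : (2 <= k)%N) (gamma_ge1 : (1 <= gamma)%N).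
Hypothesis dH_Hmetric : H_metric gamma dH.

Local Notation K := (gamma%:R * (k ^ 2)%:R : R).
Local Notation r := (K^-1).
Local Notation tight := (tight_bound gamma dH atime pos).
Local Notation mset := {set 'I_m}.
Local Notation groups := (seq ({ffun 'I_k -> 'I_m} * R)).

Definition dual_mass (y : mset -> R) (u : 'I_m) : R := \sum_(T : mset | u \in T) y T.

Definition inner_dual (y : mset -> R) (S : mset) (u w : 'I_m) : R :=
  \sum_(T : mset | (T \subset S) && (u \notin T) && (w \notin T)) y T.

Definition dual_total (y : mset -> R) : R := \sum_(T : mset) y T.

Record gd_inv (t : R) (A : {set mset}) (M : groups) (y : mset -> R) : Prop := {
  inv_trivI : trivIset A;
  inv_set0 : set0 \notin A;
  inv_y_ge0 : forall T, 0 <= y T;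
  inv_y_supp : forall T, y T != 0 -> exists2 B, B \in A & T \subset B;
  inv_y_ndvd : forall T, y T != 0 -> ~~ (k %| #|T|)%N;
  inv_block : forall B, B \in A -> (k %| #|B :&: matched M|)%N && (#|freeS M B| < k)%N;
  inv_matched_sub : matched M \subset cover A;
  inv_matched_card : #|matched M| = (k * size M)%N;
  inv_mass_le : forall u, u \in cover A -> dual_mass y u <= r * (t - atime u);
  inv_mass_free : forall u, u \in cover A -> u \notin matched M ->
    dual_mass y u = r * (t - atime u);
  inv_feasible : forall u w, u \in cover A -> w \in cover A -> load y u w <= tight u w;
  inv_dmet : forall u w, u \in cover A -> w \in cover A -> pblock A w = pblock A u ->
    dmet dH (pos u) (pos w) <= K * (load y u w + 2 * inner_dual y (pblock A u) u w);
  inv_cost : alg_cost dH atime pos M <= (size M)%:R * (2 * k%:R * K) * dual_total y }.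

Lemma K_gt0 : 0 < K.
Proof. by rewrite mulr_gt0 // ltr0n ?expn_gt0 // (leq_trans _ k_ge2). Qed.

Lemma K_mul_rate : K * r = 1.
Proof. by rewrite mulfV ?gt_eqF ?K_gt0. Qed.

Lemma rate_ge0 : 0 <= r.
Proof. by rewrite invr_ge0 ltW ?K_gt0. Qed.

Lemma K_tight u w : K * tight u w = opt_cost_pair dH atime pos u w.
Proof. by rewrite mulrCA mulfV ?gt_eqF ?K_gt0 ?mulr1. Qed.

Lemma tightC u w : tight u w = tight w u.
Proof. by rewrite /tight_bound /opt_cost_pair dmetC distrC. Qed.

Lemma tight_ge0 u w : 0 <= tight u w.
Proof.
by rewrite divr_ge0 ?(ltW K_gt0) // addr_ge0 ?(dmet_ge0 dH_Hmetric).
Qed.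

Lemma tight_ge_wait u w : r * (atime u - atime w) <= tight u w.
Proof.
rewrite mulrC ler_wpM2r ?invr_ge0 ?(ltW K_gt0) // ler_wpDl ?(dmet_ge0 dH_Hmetric) //.
exact: ler_norm.
Qed.

Lemma dmet_le_tight u w : dmet dH (pos u) (pos w) <= K * tight u w.
Proof. by rewrite K_tight lerDl normr_ge0. Qed.

Lemma loadE (y : mset -> R) u w :
  load y u w = \sum_(T : mset) (if (u \in T) != (w \in T) then y T else 0).
Proof. by rewrite /load big_mkcond. Qed.

Lemma inner_dualE (y : mset -> R) S u w : inner_dual y S u w =
  \sum_(T : mset) (if (T \subset S) && (u \notin T) && (w \notin T) then y T else 0).
Proof. by rewrite /inner_dual big_mkcond. Qed.

Lemma dual_massE (y : mset -> R) u :
  dual_mass y u = \sum_(T : mset) (if u \in T then y T else 0).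
Proof. by rewrite /dual_mass big_mkcond. Qed.

Lemma loadC (y : mset -> R) u w : load y u w = load y w u.
Proof. by apply: eq_bigl => T; rewrite eq_sym. Qed.

Lemma loadxx (y : mset -> R) u : load y u u = 0.
Proof. by rewrite loadE big1 // => T _; rewrite eqxx. Qed.

Lemma inner_dualC (y : mset -> R) S u w : inner_dual y S u w = inner_dual y S w u.
Proof. by apply: eq_bigl => T; rewrite -andbA (andbC (u \notin T)) andbA. Qed.

Lemma inner_dual_subset (y : mset -> R) (S S' : mset) u w : (forall T, 0 <= y T) ->
  S \subset S' -> inner_dual y S u w <= inner_dual y S' u w.
Proof.
move=> y_ge0 sSS'; rewrite !inner_dualE; apply: ler_sum => T _.
case: ifP => [/andP[/andP[sTS ->] ->]|_]; last by case: ifP.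
by rewrite (subset_trans sTS sSS').
Qed.

Lemma load_mono (y1 y2 : mset -> R) u w : (forall T, y1 T <= y2 T) ->
  load y1 u w <= load y2 u w.
Proof. by move=> le_y; apply: ler_sum => T _. Qed.

Lemma inner_dual_mono (y1 y2 : mset -> R) S u w : (forall T, y1 T <= y2 T) ->
  inner_dual y1 S u w <= inner_dual y2 S u w.
Proof. by move=> le_y; apply: ler_sum => T _. Qed.

Lemma dual_total_mono (y1 y2 : mset -> R) : (forall T, y1 T <= y2 T) ->
  dual_total y1 <= dual_total y2.
Proof. by move=> le_y; apply: ler_sum => T _. Qed.

Lemma dist_bound_ge0 (y : mset -> R) S u w : (forall T, 0 <= y T) ->
  0 <= K * (load y u w + 2 * inner_dual y S u w).
Proof.
by move=> y_ge0; rewrite mulr_ge0 ?(ltW K_gt0) // addr_ge0 ?mulr_ge0 ?sumr_ge0.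
Qed.

Lemma gd_inv_init : gd_inv 0 set0 [::] (fun _ => 0).
Proof.
have cover0 : cover (set0 : {set mset}) = set0 by rewrite /cover big_set0.
have matched0 : matched ([::] : groups) = set0 by rewrite /matched big_nil.
split=> //; rewrite ?cover0 ?matched0 ?cards0 ?muln0 ?sub0set ?inE //;
  try by move=> ?; rewrite ?inE ?eqxx.
- by rewrite /trivIset cover0 big_set0 cards0.
- by rewrite /alg_cost big_nil !mul0r.
Qed.

Lemma dual_out_of_cover (A : {set mset}) (y : mset -> R) v (T : mset) :
  (forall T, y T != 0 -> exists2 B, B \in A & T \subset B) ->
  v \notin cover A -> v \in T -> y T = 0.
Proof.
move=> y_supp vA vT; apply/eqP; apply: contraNT vA => /y_supp[B BA sTB].
by apply/bigcupP; exists B => //; apply: (subsetP sTB).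
Qed.

(* A newcomer lies in no set carrying dual mass, so its load towards [w] is the
   dual mass of [w], which is at most [r] times the waiting time of [w]. *)
Lemma gd_inv_arrive t (A : {set mset}) (M : groups) (y : mset -> R) v :
  gd_inv t A M y -> v \notin cover A -> atime v = t -> gd_inv t ([set v] |: A) M y.
Proof.
move=> I vA tv; set A' := [set v] |: A.
have y_v (T : mset) : v \in T -> y T = 0 := dual_out_of_cover (inv_y_supp I) vA.
have mass_v : dual_mass y v = 0 by apply: big1.
have load_v w : load y v w = dual_mass y w.
  rewrite loadE dual_massE; apply: eq_bigr => T _.
  by case vT: (v \in T); [rewrite y_v ?if_same | case: (w \in T)].
have [trivI' vA'] : trivIset A' /\ [set v] \notin A.
  apply: trivIsetU1 (inv_trivI I) (inv_set0 I) => B BA.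
  by rewrite disjoints1; apply: contra vA => vB; apply/bigcupP; exists B.
have cover' : cover A' = [set v] :|: cover A by rewrite cover_setU1.
have pblock_v : pblock A' v = [set v] by rewrite (def_pblock trivI' (setU11 _ _)) ?set11.
have pblock_A u : u \in cover A -> pblock A' u = pblock A u.
  by move=> uA; apply: def_pblock; rewrite ?setU1r ?pblock_mem ?mem_pblock.
have v_free : v \notin matched M by apply: contra vA; apply: (subsetP (inv_matched_sub I)).
have feasible_v w : w \in cover A -> load y v w <= tight v w.
  by move=> wA; rewrite load_v (le_trans (inv_mass_le I wA)) // -tv tight_ge_wait.
have pblock_ne u : u \in cover A -> pblock A u != [set v].
  by move=> uA; apply: contraNneq vA' => <-; rewrite pblock_mem.
split; rewrite ?cover' //; first [exact: (inv_y_ge0 I) | exact: (inv_y_ndvd I) |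
  exact: (inv_matched_card I) | exact: (inv_cost I) | idtac].
- by rewrite !inE negb_or (inv_set0 I) andbT eq_sym -card_gt0 cards1.
- by move=> T /(inv_y_supp I)[B BA sTB]; exists B; rewrite ?setU1r.
- move=> B /setU1P[->|]; last exact: (inv_block I).
  rewrite (_ : [set v] :&: _ = set0) ?cards0 ?dvdn0; last first.
    by apply/setP => x; rewrite !inE; case: eqP => // ->; rewrite (negPf v_free).
  by rewrite (leq_ltn_trans (subset_leq_card (subsetDl _ _))) ?cards1.
- exact: subset_trans (inv_matched_sub I) (subsetUr _ _).
- by move=> u /setU1P[->|]; [rewrite mass_v tv subrr mulr0 | exact: (inv_mass_le I)].
- by move=> u /setU1P[->|]; [rewrite mass_v tv subrr mulr0 | exact: (inv_mass_free I)].
- move=> u w /setU1P[->|uA] /setU1P[->|wA].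
  + by rewrite loadxx tight_ge0.
  + exact: feasible_v.
  + by rewrite loadC tightC feasible_v.
  + exact: (inv_feasible I).
- move=> u w /setU1P[->|uA] /setU1P[->|wA].
  + by rewrite (dmetxx dH_Hmetric) => _; apply/dist_bound_ge0/(inv_y_ge0 I).
  + by rewrite pblock_v pblock_A // => /eqP; rewrite (negPf (pblock_ne w wA)).
  + by rewrite pblock_v pblock_A // => /esym/eqP; rewrite (negPf (pblock_ne u uA)).
  + by rewrite !pblock_A //; apply: (inv_dmet I).
Qed.

Section Advance.
Variables (A : {set mset}) (M : groups) (y : mset -> R) (D : R).
Hypotheses (A_trivI : trivIset A) (D_gt0 : 0 < D).
Local Notation y' := (grow r A M y D).

Lemma growE T : y' T = y T + (if (T \in A) && (freeS M T != set0) then r * D else 0).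
Proof. by rewrite /grow; case: ifP; rewrite ?addr0. Qed.

Lemma grow_ge T : y T <= y' T.
Proof. by rewrite growE lerDl; case: ifP => // _; rewrite mulr_ge0 ?rate_ge0 ?ltW. Qed.

Lemma dual_mass_grow u : u \in cover A ->
  dual_mass y' u = dual_mass y u + (if freeS M (pblock A u) != set0 then r * D else 0).
Proof.
move=> uA; rewrite !dual_massE (eq_bigr (fun T : mset => (if u \in T then y T else 0) +
   (if [&& u \in T, T \in A & freeS M T != set0] then r * D else 0))); last first.
  by move=> T _; rewrite growE; case: (u \in T); rewrite ?addr0.
rewrite big_split /=; congr (_ + _).
rewrite (bigD1 (pblock A u)) //= mem_pblock uA pblock_mem //= big1 ?addr0 //.
move=> T TnB; case: and3P => // -[uT TA _].
by rewrite (def_pblock A_trivI TA uT) eqxx in TnB.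
Qed.

Lemma load_grow_same_block u w : u \in cover A -> w \in cover A ->
  pblock A u = pblock A w -> load y' u w = load y u w.
Proof.
move=> uA wA same; rewrite !loadE; apply: eq_bigr => T _.
case TA: (T \in A); last by rewrite /grow TA.
suff -> : (u \in T) = (w \in T) by rewrite eqxx.
apply/idP/idP => xT; rewrite -(def_pblock A_trivI TA xT).
  by rewrite same mem_pblock.
by rewrite -same mem_pblock.
Qed.

(* Only active sets containing free requests grow, and the sizes of those are not
   multiples of [k]; the same-block loads do not change. *)
Lemma gd_inv_advance t : gd_inv t A M y ->
  (forall u w, u \in cover A -> w \in cover A -> pblock A u != pblock A w ->
     load y' u w <= tight u w) ->
  gd_inv (t + D) A M y'.
Proof.
move=> I cross_feasible; have y_le_y' := grow_ge.
have rD_ge0 : 0 <= r * D by rewrite mulr_ge0 ?rate_ge0 ?ltW.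
split; first [exact: (inv_trivI I) | exact: (inv_set0 I) | exact: (inv_block I) |
  exact: (inv_matched_sub I) | exact: (inv_matched_card I) | idtac].
- by move=> T; apply: le_trans (grow_ge T); apply: (inv_y_ge0 I).
- move=> T; rewrite growE; case: ifP => [/andP[TA _] _|_]; first by exists T.
  by rewrite addr0; apply: (inv_y_supp I).
- move=> T; rewrite growE; case: ifP => [/andP[TA free_T] _|_]; last first.
    by rewrite addr0; apply: (inv_y_ndvd I).
  case/andP: (inv_block I TA) => dvd_matched lt_free.
  by apply: not_dvdn_cardsD dvd_matched _; rewrite lt_free card_gt0 free_T.
- move=> u uA; rewrite dual_mass_grow // addrAC mulrDr.
  by apply: lerD (inv_mass_le I uA) _; case: ifP.
- move=> u uA um; rewrite dual_mass_grow // (inv_mass_free I) // addrAC [in RHS]mulrDr.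
  have -> // : freeS M (pblock A u) != set0.
  by apply/set0Pn; exists u; rewrite inE um mem_pblock.
- move=> u w uA wA; have [same|] := eqVneq (pblock A u) (pblock A w).
    by rewrite load_grow_same_block //; apply: (inv_feasible I).
  exact: cross_feasible.
- move=> u w uA wA same; apply: le_trans (inv_dmet I uA wA same) _.
  by rewrite ler_wpM2l ?(ltW K_gt0) // lerD ?load_mono ?ler_wpM2l ?inner_dual_mono.
- apply: le_trans (inv_cost I) _; rewrite ler_wpM2l ?dual_total_mono //.
  by rewrite !mulr_ge0 ?(ltW K_gt0).
Qed.
End Advance.

(* Summed over the members of the group, each set [T] is charged at most twice:
   once by the load or the inner dual, once by the dual mass. *)
Lemma group_cost_le (y : mset -> R) (S : mset) (g : {ffun 'I_k -> 'I_m}) a t :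
  (forall T, 0 <= y T) ->
  (forall i, dmet dH (pos (g i)) (pos a) <=
             K * (load y (g i) a + 2 * inner_dual y S (g i) a)) ->
  (forall i, dual_mass y (g i) = r * (t - atime (g i))) ->
  dH (fun i => pos (g i)) + \sum_(i < k) (t - atime (g i)) <= 2 * k%:R * K * dual_total y.
Proof.
move=> y_ge0 dmet_le mass_g.
have wait_g i : t - atime (g i) = K * dual_mass y (g i).
  by rewrite mass_g mulrA K_mul_rate mul1r.
apply: le_trans (lerD (dH_le_sum_dmet k_ge2 dH_Hmetric _ (pos a)) (lexx _)) _.
have -> : 2 * k%:R * K * dual_total y = \sum_(i < k) K * (2 * dual_total y).
  by rewrite sumr_const card_ord -mulr_natl; ring.
rewrite -big_split; apply: ler_sum => i _; rewrite wait_g.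
apply: le_trans (lerD (dmet_le i) (lexx _)) _; rewrite -mulrDr ler_wpM2l ?(ltW K_gt0) //.
rewrite loadE inner_dualE dual_massE /dual_total !mulr_sumr -!big_split /=.
apply: ler_sum => T _; have := y_ge0 T.
by case: (g i \in T); case: (a \in T); case: (T \subset S) => /=; lra.
Qed.

Lemma card_grp (g : {ffun 'I_k -> 'I_m}) : injectiveb g -> #|grp g| = k.
Proof. by move/injectiveP => g_inj; rewrite card_imset // card_ord. Qed.

Lemma card_bigcup_grp (gs : seq {ffun 'I_k -> 'I_m}) :
  (forall g, g \in gs -> injectiveb g) ->
  pairwise (fun g h : {ffun 'I_k -> 'I_m} => [disjoint grp g & grp h]) gs ->
  #|\bigcup_(g <- gs) grp g| = (k * size gs)%N.
Proof.
elim: gs => [|g gs IHgs] g_inj; first by rewrite big_nil cards0 muln0.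
rewrite pairwise_cons => /andP[disj_g disj_gs].
have gs_inj h : h \in gs -> injectiveb h by move=> hgs; rewrite g_inj // in_cons hgs orbT.
rewrite big_cons cardsU_disjoint ?card_grp ?IHgs ?g_inj ?mem_head ?mulnS //.
by rewrite bigcup_seq; apply/bigcup_disjoint => h /(allP disj_g).
Qed.

(* Dual sets carrying mass lie in [S1], in [S2] or outside [S1 :|: S2]; in each case
   the sets separating the path x-u-w-z dominate those separating x from z. *)
Lemma load_inner_dual_merge (y : mset -> R) (S1 S2 : mset) x u w z :
  (forall T, 0 <= y T) ->
  (forall T, y T != 0 ->
     T != set0 /\ [\/ T \subset S1, T \subset S2 | [disjoint T & S1 :|: S2]]) ->
  [disjoint S1 & S2] -> x \in S1 -> u \in S1 -> w \in S2 -> z \in S2 ->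
  load y x u + 2 * inner_dual y S1 x u + load y u w + (load y w z + 2 * inner_dual y S2 w z)
    <= load y x z + 2 * inner_dual y (S1 :|: S2) x z.
Proof.
move=> y_ge0 y_supp d12 xS1 uS1 wS2 zS2.
rewrite !loadE !inner_dualE !mulr_sumr -!big_split /=; apply: ler_sum => T _.
have [->|/y_supp[T_n0 T_supp]] := eqVneq (y T) 0; first by rewrite !if_same !mulr0 !addr0.
have yT_ge0 := y_ge0 T.
have not_both : ~~ ((T \subset S1) && (T \subset S2)).
  apply: contra T_n0 => /andP[sub1 sub2]; rewrite -subset0 -(disjoint_setI0 d12).
  by rewrite subsetI sub1.
case: T_supp => [sub1|sub2|disj].
- have notin_S2 v : v \in S2 -> (v \in T) = false.
    by move=> vS2; apply/negP => /(subsetP sub1); rewrite (disjointFl d12 vS2).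
  have sub2F : (T \subset S2) = false by apply: contraNF not_both => ->; rewrite sub1.
  rewrite sub1 sub2F (subset_trans sub1 (subsetUl _ _)) (notin_S2 w) ?(notin_S2 z) //=.
  by case: (x \in T); case: (u \in T) => /=; lra.
- have notin_S1 v : v \in S1 -> (v \in T) = false.
    by move=> vS1; apply/negP => /(subsetP sub2); rewrite (disjointFr d12 vS1).
  have sub1F : (T \subset S1) = false by apply: contraNF not_both => ->; rewrite sub2.
  rewrite sub2 sub1F (subset_trans sub2 (subsetUr _ _)) (notin_S1 x) ?(notin_S1 u) //=.
  by case: (w \in T); case: (z \in T) => /=; lra.
- have notin_S v : v \in S1 :|: S2 -> (v \in T) = false by apply: disjointFl disj.
  have notsub (S : mset) : S \subset S1 :|: S2 -> (T \subset S) = false.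
    move=> sS; apply: contraNF T_n0 => sTS.
    by rewrite -subset0 -(disjoint_setI0 disj) subsetI subxx (subset_trans sTS sS).
  rewrite !notin_S ?inE ?xS1 ?uS1 ?wS2 ?zS2 ?orbT // !notsub ?subsetUl ?subsetUr //=; lra.
Qed.

Section Merge.
Variables (t : R) (A : {set mset}) (M : groups) (y : mset -> R) (u0 w0 : 'I_m).
Variable gs : seq {ffun 'I_k -> 'I_m}.
Local Notation S1 := (pblock A u0).
Local Notation S2 := (pblock A w0).
Local Notation S := (S1 :|: S2).
Local Notation U := (\bigcup_(g <- gs) grp g).
Local Notation A' := (merge_blocks A S1 S2).
Local Notation M' := (M ++ [seq (g, t) | g <- gs]).
Hypothesis I : gd_inv t A M y.
Hypotheses (u0A : u0 \in cover A) (w0A : w0 \in cover A) (S1_S2 : S1 != S2).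
Hypothesis u0w0_tight : load y u0 w0 = tight u0 w0.
Hypothesis gs_free : forall g, g \in gs -> injectiveb g && (grp g \subset freeS M S).
Hypothesis gs_disjoint : pairwise (fun g h => [disjoint grp g & grp h]) gs.
Hypothesis gs_maximal : (#|freeS M S :\: U| < k)%N.

Let A_trivI := inv_trivI I.
Let S1_A : S1 \in A := pblock_mem u0A.
Let S2_A : S2 \in A := pblock_mem w0A.
Let S12_disjoint : [disjoint S1 & S2] := trivIsetP A_trivI _ _ S1_A S2_A S1_S2.

Lemma merge_cover : cover A' = cover A.
Proof. exact: cover_merge. Qed.

Lemma merge_pblock x : x \in cover A ->
  pblock A' x = if x \in S then S else pblock A x.
Proof. exact: (pblock_merge A_trivI (inv_set0 I)). Qed.

Lemma S_sub_cover : S \subset cover A.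
Proof. by rewrite subUset (bigcup_sup _ S1_A) (bigcup_sup _ S2_A). Qed.

Lemma U_sub_free : U \subset freeS M S.
Proof. by rewrite bigcup_seq; apply/bigcupsP => g /gs_free/andP[]. Qed.

Lemma matched_merge : matched M' = matched M :|: U.
Proof. by rewrite /matched big_cat big_map. Qed.

Lemma merge_y_supp T : y T != 0 ->
  T != set0 /\ [\/ T \subset S1, T \subset S2 | [disjoint T & S]].
Proof.
move=> yT; split.
  by apply: contra (inv_y_ndvd I yT) => /eqP ->; rewrite cards0 dvdn0.
have [B BA sTB] := inv_y_supp I yT.
have [eB1|BS1] := eqVneq B S1; first by apply: Or31; rewrite -eB1.
have [eB2|BS2] := eqVneq B S2; first by apply: Or32; rewrite -eB2.
apply/Or33/(disjointWl sTB); rewrite disjoint_sym.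
by apply: (merge_rest_disjoint A_trivI S1_A S2_A); rewrite !inE BS1 BS2.
Qed.

(* The tight pair joins the two blocks: chain x -> u0 -> w0 -> z. *)
Lemma merge_dmet_cross x z : x \in S1 -> z \in S2 ->
  dmet dH (pos x) (pos z) <= K * (load y x z + 2 * inner_dual y S x z).
Proof.
move=> xS1 zS2.
have xA : x \in cover A by apply: (subsetP S_sub_cover); rewrite inE xS1.
have zA : z \in cover A by apply: (subsetP S_sub_cover); rewrite inE zS2 orbT.
have px : pblock A x = S1 by apply: def_pblock.
have pz : pblock A z = S2 by apply: def_pblock.
have d_xu0 := inv_dmet I xA u0A (esym px); rewrite px in d_xu0.
have d_w0z := inv_dmet I w0A zA pz.
have d_u0w0 := dmet_le_tight u0 w0; rewrite -u0w0_tight in d_u0w0.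
have u0S1 : u0 \in S1 by rewrite mem_pblock.
have w0S2 : w0 \in S2 by rewrite mem_pblock.
have := ler_wpM2l (ltW K_gt0) (load_inner_dual_merge (inv_y_ge0 I) merge_y_supp
  S12_disjoint xS1 u0S1 w0S2 zS2).
have := dmet_triangle k_ge2 dH_Hmetric (pos x) (pos u0) (pos z).
have := dmet_triangle k_ge2 dH_Hmetric (pos u0) (pos w0) (pos z).
rewrite !mulrDr in d_xu0 d_w0z d_u0w0 * => ? ? ?; lra.
Qed.

Lemma merge_dmet x z : x \in cover A' -> z \in cover A' -> pblock A' z = pblock A' x ->
  dmet dH (pos x) (pos z) <= K * (load y x z + 2 * inner_dual y (pblock A' x) x z).
Proof.
rewrite merge_cover => xA zA; rewrite !merge_pblock //.
have own_block v : v \in cover A -> v \in pblock A v by rewrite mem_pblock.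
case: ifP => zS; case: ifP => xS => same_block.
- have widen (S0 : mset) : S0 \subset S ->
      dmet dH (pos x) (pos z) <= K * (load y x z + 2 * inner_dual y S0 x z) ->
      dmet dH (pos x) (pos z) <= K * (load y x z + 2 * inner_dual y S x z).
    move=> sS0S /le_trans; apply; rewrite ler_wpM2l ?(ltW K_gt0) // lerD // ler_wpM2l //.
    exact: inner_dual_subset (inv_y_ge0 I) sS0S.
  have old_block Si : Si \in A -> x \in Si -> z \in Si ->
      dmet dH (pos x) (pos z) <= K * (load y x z + 2 * inner_dual y Si x z).
    move=> SiA xSi zSi; rewrite -(def_pblock A_trivI SiA xSi).
    by apply: (inv_dmet I) => //; rewrite !(def_pblock A_trivI SiA).
  move: xS zS; rewrite !inE; case xS1: (x \in S1); case zS1: (z \in S1) => //= xS2 zS2.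
  + exact/(widen _ (subsetUl _ _))/old_block.
  + exact: merge_dmet_cross.
  + by rewrite dmetC loadC inner_dualC; apply: merge_dmet_cross.
  + exact/(widen _ (subsetUr _ _))/old_block.
- by move: (own_block x xA); rewrite -same_block xS.
- by move: (own_block z zA); rewrite same_block zS.
- exact: (inv_dmet I).
Qed.

Lemma card_U : #|U| = (k * size gs)%N.
Proof. by apply: card_bigcup_grp gs_disjoint => g /gs_free/andP[]. Qed.

Lemma U_disjoint_matched : [disjoint U & matched M].
Proof.
rewrite disjoints_subset (subset_trans U_sub_free) //.
by apply/subsetP => v; rewrite !inE => /andP[].
Qed.

Lemma merge_block B : B \in A' ->
  (k %| #|B :&: matched M'|)%N && (#|freeS M' B| < k)%N.
Proof.
have U_S : U \subset S by apply: subset_trans U_sub_free (subsetDl _ _).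
rewrite /freeS matched_merge -setDDl => /setU1P[->|B_rest].
  rewrite gs_maximal andbT setIUr (setIidPr U_S) cardsU_disjoint; last first.
    by rewrite disjoint_sym; apply: disjointWr (subsetIr _ _) U_disjoint_matched.
  rewrite setIUl cardsU_disjoint ?card_U; last first.
    exact: disjointWl (subsetIl _ _) (disjointWr (subsetIl _ _) S12_disjoint).
  case/andP: (inv_block I S1_A) => dvd1 _; case/andP: (inv_block I S2_A) => dvd2 _.
  by rewrite !dvdn_add ?dvdn_mulr.
have B_U : [disjoint B & U].
  by rewrite disjoint_sym (disjointWl U_S) // (merge_rest_disjoint A_trivI S1_A S2_A).
rewrite setIUr (disjoint_setI0 B_U) setU0 (setDidPl _); last first.
  exact: disjointWl (subsetDl _ _) B_U.
by apply: (inv_block I); move: B_rest; rewrite !inE => /and3P[].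
Qed.

Lemma merge_cost :
  alg_cost dH atime pos M' <= (size M')%:R * (2 * k%:R * K) * dual_total y.
Proof.
rewrite /alg_cost big_cat big_map size_cat natrD -[X in _ <= X]mulrA [X in _ <= X]mulrDl.
apply: lerD; first by rewrite mulrA; exact: (inv_cost I).
rewrite size_map; apply: ler_sum_seq_const => g /gs_free/andP[_ g_free].
have gS i : g i \in freeS M S by apply: (subsetP g_free); apply: imset_f.
have gA i : g i \in cover A by apply: (subsetP S_sub_cover); case/setDP: (gS i).
apply: (group_cost_le (S := S) (a := u0)) => [|i|i].
- exact: (inv_y_ge0 I).
- have u0S : u0 \in S by rewrite inE mem_pblock u0A.
  have giS : g i \in S by case/setDP: (gS i).
  have := @merge_dmet (g i) u0; rewrite merge_cover !merge_pblock ?giS ?u0S //.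
  by apply.
- by apply: (inv_mass_free I); case/setDP: (gS i).
Qed.

Lemma gd_inv_merge : gd_inv t A' M' y.
Proof.
split; first [exact: merge_block | exact: merge_dmet | exact: merge_cost | idtac];
  rewrite ?merge_cover ?matched_merge.
- exact: (trivIset_merge A_trivI (inv_set0 I)).
- exact: (merge_blocks_set0 S2 (inv_set0 I) S1_A).
- exact: (inv_y_ge0 I).
- move=> T /(inv_y_supp I)[B BA sTB].
  have [B' B'A' sBB'] := merge_blocks_coarser S1 S2 BA.
  by exists B'; rewrite ?(subset_trans sTB).
- exact: (inv_y_ndvd I).
- rewrite subUset (inv_matched_sub I) (subset_trans U_sub_free) //.
  exact: subset_trans (subsetDl _ _) S_sub_cover.
- rewrite cardsU_disjoint 1?disjoint_sym ?U_disjoint_matched //.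
  by rewrite (inv_matched_card I) card_U size_cat size_map mulnDr.
- exact: (inv_mass_le I).
- by move=> u uA; rewrite inE negb_or => /andP[um _]; apply: (inv_mass_free I).
- exact: (inv_feasible I).
Qed.

End Merge.

Lemma gd_inv_reachable c : gd_reachable gamma dH atime pos r c ->
  gd_inv (gs_t c) (gs_A c) (gs_M c) (gs_y c).
Proof.
elim=> [|c0 c1 _ IH step]; first exact: gd_inv_init.
case: step IH => /= [t A M y v vA tv _ I | t A M y D D_gt0 _ feasible I |
                     t A M y u w gs uA wA ne tight_uw gs_free gs_disj gs_max I].
- exact: gd_inv_arrive.
- apply: gd_inv_advance (inv_trivI I) D_gt0 t I _ => u w uA wA ne.
  by case: (feasible u w uA wA ne).
- exact: gd_inv_merge.
Qed.

(* Otherwise [T] would be a union of groups of [P], hence of size divisible by [k]. *)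
Lemma perfect_kmatching_cut (P : {set {ffun 'I_k -> 'I_m}}) (T : mset) :
  perfect_kmatching P -> ~~ (k %| #|T|)%N ->
  exists2 F, F \in P & [exists i, F i \in T] && [exists j, F j \notin T].
Proof.
case=> F_inj F_disj F_cover T_ndvd.
have [/existsP[F /andP[FP cut]]|no_cut] :=
  boolP [exists F in P, [exists i, F i \in T] && [exists j, F j \notin T]].
  by exists F.
case/negP: T_ndvd.
have -> : #|T| = (\sum_(F in P) #|T :&: grp F|)%N.
  rewrite -sum1_card (eq_bigr (fun v => \sum_(F in P) (v \in grp F) : nat)%N).
    by rewrite exchange_big /=; apply: eq_bigr => F _; apply: sum_mem_card.
  move=> v _; have [F0 F0P vF0] := F_cover v.
  rewrite (bigD1 F0) //= vF0 big1 // => G /andP[GP GF0].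
  by rewrite (disjointFr (F_disj F0 G F0P GP _) vF0) // eq_sym.
apply: dvdn_sum => F FP; have: ~~ ([exists i, F i \in T] && [exists j, F j \notin T]).
  by apply: contra no_cut => cut; apply/existsP; exists F; rewrite FP.
case: (boolP [exists i, F i \in T]) => [some_in /= /existsPn all_in|/existsPn no_in _].
  have /setIidPr -> : grp F \subset T.
    by apply/subsetP => _ /imsetP[i _ ->]; have := all_in i; rewrite negbK.
  by rewrite card_grp //; apply/injectiveP/F_inj.
suff -> : T :&: grp F = set0 by rewrite cards0 dvdn0.
apply/setP => v; rewrite !inE; apply/andP => -[vT /imsetP[i _ vFi]].
by case/negP: (no_in i); rewrite -vFi.
Qed.

Let i0 : 'I_k := Ordinal (ltnW k_ge2).

(* Each distance is at most [2 gamma dH F], and the arrival-time differences add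
   up to at most [k + 1] times the waiting cost of the group. *)
Lemma pair_costs_le_group_cost (F : {ffun 'I_k -> 'I_m}) :
  \sum_(l < k) opt_cost_pair dH atime pos (F i0) (F l)
    <= 2 * k%:R * gamma%:R * group_opt_cost dH atime pos F.
Proof.
rewrite /group_opt_cost /opt_cost_pair.
set tmax := \big[Num.max/0]_(j < k) atime (F j).
set wait := \sum_(i < k) (tmax - atime (F i)).
have le_tmax j : atime (F j) <= tmax by apply: le_bigmax.
have wait_ge0 : 0 <= wait by rewrite sumr_ge0 // => i _; rewrite subr_ge0.
have wait_i0 : tmax - atime (F i0) <= wait.
  by rewrite /wait (bigD1 i0) //= lerDl sumr_ge0 // => i _; rewrite subr_ge0.
apply: (@le_trans _ _ (\sum_(l < k) (2 * gamma%:R * dH (fun i => pos (F i))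
     + ((tmax - atime (F i0)) + (tmax - atime (F l)))))).
  apply: ler_sum => l _; apply: lerD; first exact: (dmet_le_group gamma_ge1 dH_Hmetric).
  rewrite ler_norml; have := le_tmax i0; have := le_tmax l; clearbody tmax.
  by move=> ? ?; apply/andP; split; lra.
have sum_const (c : R) : \sum_(l < k) c = k%:R * c by rewrite sumr_const card_ord mulr_natl.
rewrite big_split big_split /= !sum_const -/wait; clearbody tmax wait.
have k1_le : k%:R + 1 <= 2 * k%:R * gamma%:R :> R.
  have : 2 * k%:R * 1 <= 2 * k%:R * gamma%:R :> R by rewrite ler_wpM2l ?mulr_ge0 ?ler1n.
  have : 1 <= k%:R :> R by rewrite ler1n (ltnW k_ge2).
  lra.
have := ler_wpM2l (ler0n R k) wait_i0; have := ler_wpM2r wait_ge0 k1_le; lra.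
Qed.

(* Every set carrying dual mass is cut by a group of [P], and is then counted in
   the load of a pair formed by the first member of that group and another one. *)
Lemma dual_total_le_pair_loads (y : mset -> R) (P : {set {ffun 'I_k -> 'I_m}}) :
  (forall T, 0 <= y T) -> (forall T, y T != 0 -> ~~ (k %| #|T|)%N) ->
  perfect_kmatching P ->
  dual_total y <= \sum_(F in P) \sum_(l < k) load y (F i0) (F l).
Proof.
move=> y_ge0 y_ndvd P_perfect.
have cut_ge0 F l (T : mset) : 0 <= if (F i0 \in T) != (F l \in T) then y T else 0.
  by case: ifP.
apply: (@le_trans _ _ (\sum_(T : mset) \sum_(F in P) \sum_(l < k)
    (if (F i0 \in T) != (F l \in T) then y T else 0))); last first.
  rewrite exchange_big; apply: ler_sum => F FP.
  by rewrite exchange_big; apply: ler_sum => l _; rewrite loadE.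
apply: ler_sum => T _; have [->|yT] := eqVneq (y T) 0.
  by rewrite big1 // => F _; rewrite big1 // => l _; rewrite if_same.
have [F FP /andP[/existsP[i FiT] /existsP[j FjT]]] :=
  perfect_kmatching_cut P_perfect (y_ndvd T yT).
pose l := if F i0 \in T then j else i.
have cut_l : y T <= if (F i0 \in T) != (F l \in T) then y T else 0.
  by rewrite /l; case: (F i0 \in T) => /=; rewrite ?(negPf FjT) ?FiT.
apply: le_trans cut_l _; rewrite (bigD1 F) //= (bigD1 l) //= -addrA lerDl.
by rewrite addr_ge0 ?sumr_ge0 // => *; rewrite ?sumr_ge0 // => *; apply: cut_ge0.
Qed.

Lemma dual_total_le_matching_cost (y : mset -> R) (P : {set {ffun 'I_k -> 'I_m}}) :
  (forall T, 0 <= y T) -> (forall T, y T != 0 -> ~~ (k %| #|T|)%N) ->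
  (forall u w, load y u w <= tight u w) ->
  perfect_kmatching P ->
  K * dual_total y <= 2 * k%:R * gamma%:R * matching_cost dH atime pos P.
Proof.
move=> y_ge0 y_ndvd feasible P_perfect.
apply: le_trans (ler_wpM2l (ltW K_gt0) (dual_total_le_pair_loads y_ge0 y_ndvd P_perfect)) _.
rewrite /matching_cost !mulr_sumr; apply: ler_sum => F FP.
apply: le_trans (pair_costs_le_group_cost F); rewrite mulr_sumr; apply: ler_sum => l _.
by rewrite -K_tight ler_wpM2l ?(ltW K_gt0).
Qed.

Lemma matching_cost_ge0 P : 0 <= matching_cost dH atime pos P.
Proof.
rewrite sumr_ge0 // => F _; rewrite addr_ge0 ?(dH_ge0 dH_Hmetric) //.
by rewrite sumr_ge0 // => i _; rewrite subr_ge0 le_bigmax.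
Qed.

Lemma gd_alg_cost_le t (A : {set mset}) (M : groups) (y : mset -> R)
    (P : {set {ffun 'I_k -> 'I_m}}) :
  gd_inv t A M y -> matched M = setT -> perfect_kmatching P ->
  alg_cost dH atime pos M <= (4 * m * k * gamma)%:R * matching_cost dH atime pos P.
Proof.
move=> I all_matched P_perfect.
have in_cover v : v \in cover A.
  by apply: (subsetP (inv_matched_sub I)); rewrite all_matched inE.
have size_M : k%:R * (size M)%:R = m%:R :> R.
  by rewrite -natrM -(inv_matched_card I) all_matched cardsT card_ord.
have dual_le := dual_total_le_matching_cost (inv_y_ge0 I) (inv_y_ndvd I)
  (fun u w => inv_feasible I (in_cover u) (in_cover w)) P_perfect.
apply: le_trans (inv_cost I) _.
rewrite (_ : _ * _ * _ = (size M * 2 * k)%:R * (K * dual_total y)); last first.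
  by rewrite !natrM; ring.
apply: le_trans (ler_wpM2l (ler0n _ _) dual_le) _.
by rewrite le_eqVlt; apply/orP; left; apply/eqP; rewrite !natrM -size_M; ring.
Qed.

End GreedyDual.

Unset Implicit Arguments.

Theorem theorem2 (R : realType) (X : Type) (k m gamma : nat)
    (dH : ('I_k -> X) -> R) (atime : 'I_m -> R) (pos : 'I_m -> X) :
  (2 <= k)%N -> (1 <= gamma <= k - 1)%N ->
  H_metric gamma dH ->
  (k %| m)%N ->
  (forall v, 0 <= atime v) ->
  (forall u v : 'I_m, (val u <= val v)%N -> atime u <= atime v) ->
  forall c : gstate R m k,
    gd_reachable gamma dH atime pos (gamma%:R * (k ^ 2)%:R)^-1 c ->
    gd_complete c ->
    forall P : {set {ffun 'I_k -> 'I_m}}, perfect_kmatching P ->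
      alg_cost dH atime pos (gs_M c)
        <= ((4 * m * k + k ^ 2) * gamma)%:R * matching_cost dH atime pos P.
Proof.
move=> k_ge2 /andP[gamma_ge1 _] dH_Hmetric _ _ _ [t A M y] reach all_matched P P_perfect.
have I := gd_inv_reachable k_ge2 gamma_ge1 dH_Hmetric reach.
apply: le_trans (gd_alg_cost_le k_ge2 gamma_ge1 dH_Hmetric I all_matched P_perfect) _.
rewrite ler_wpM2r ?ler_nat ?leq_mul2r ?leq_addr ?orbT //.
exact: matching_cost_ge0 dH_Hmetric P.
Qed.
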